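(* Let $g$ be an $n$-variable Boolean function and $b\in\mathbb{F}_2$. Let $g_b$ be the $(n+1)$-variable Boolean function $$g_b(X_{n+1},X_n,\ldots,X_1)=(1\oplus X_{n+1})\,g(X_n,\ldots,X_1)\oplus X_{n+1}\bigl(b\oplus g(1\oplus X_n,\ldots,1\oplus X_1)\bigr).$$ Then: (1) for every $\bm{\beta}=(a,\bm{\alpha})\in\mathbb{F}_2^{n+1}$ with $a\in\mathbb{F}_2$ (the coordinate corresponding to $X_{n+1}$) and $\bm{\alpha}\in\mathbb{F}_2^n$, $$W_{g_b}(\bm{\beta})=\frac{1+(-1)^{b+\mathrm{wt}(\bm{\beta})}}{2}\,W_g(\bm{\alpha});$$ (2) $H_\infty(g_b)=H_\infty(g)$; (3) $\mathrm{Inf}(g_b)=\mathrm{Inf}(g)+\epsilon_b(g)$, where $\epsilon_b(g)=\sum_{\bm{\alpha}\in\mathbb{F}_2^n,\ \mathrm{wt}(\bm{\alpha})\not\equiv b \pmod 2}W_g^2(\bm{\alpha})$.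
   Context: Boolean functions are maps $\mathbb{F}_2^n\to\mathbb{F}_2$, with an $n$-variable function written $g(X_n,\ldots,X_1)$ and vectors ordered accordingly. Walsh transform: $W_f(\bm{\alpha})=2^{-n}\sum_{\mathbf{x}}(-1)^{f(\mathbf{x})\oplus\langle\mathbf{x},\bm{\alpha}\rangle}$, $\langle\mathbf{x},\bm{\alpha}\rangle=\bigoplus_ix_i\alpha_i$. Logarithms base 2. Min-entropy: $H_\infty(f)=\min_{\bm{\alpha}:W_f^2(\bm{\alpha})\ne0}\log(1/W_f^2(\bm{\alpha}))$. Influence: $\mathrm{Inf}(f)=\sum_{i=1}^n\Pr_{\mathbf{x}}[f(\mathbf{x})\ne f(\mathbf{x}\oplus\mathbf{e}_i)]=\sum_{\bm{\alpha}}\mathrm{wt}(\bm{\alpha})W_f^2(\bm{\alpha})$. *)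

From HB Require Import structures.
From mathcomp Require Import all_boot all_order all_algebra.
From mathcomp Require Import reals ereal exp.
Set Implicit Arguments. Unset Strict Implicit. Unset Printing Implicit Defensive.
Import Order.TTheory GRing.Theory Num.Theory.
Local Open Scope ring_scope.

(* Vectors of F_2^n: x : {ffun 'I_n -> bool}; coordinate i (0-based) is X_{i+1}. *)
Definition vec (n : nat) := {ffun 'I_n -> bool}.
Definition bfun (n : nat) := vec n -> bool.

Definition wt n (x : vec n) : nat := #|[set i | x i]|.

Definition dotb n (x a : vec n) : bool := \big[addb/false]_(i < n) (x i && a i).

Definition walsh (R : realType) n (f : bfun n) (a : vec n) : R :=
  (2 ^+ n)^-1 * \sum_(x : vec n) (-1) ^+ (f x (+) dotb x a).

Definition log2 (R : realType) (x : R) : R := ln x / ln 2.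

(* Min-entropy: min over a with W_f(a)^2 != 0 of log(1/W_f(a)^2)
   (as an extended real, +oo if the set is empty, which never happens). *)
Definition Hinf (R : realType) n (f : bfun n) : \bar R :=
  \big[Order.min/+oo%E]_(a : vec n | walsh R f a ^+ 2 != 0)
     ((log2 ((walsh R f a ^+ 2)^-1))%:E).

Definition flip n (x : vec n) (i : 'I_n) : vec n := [ffun j => x j (+) (j == i)].

Definition Inf (R : realType) n (f : bfun n) : R :=
  \sum_(i < n) (#|[set x : vec n | f x != f (flip x i)]|%:R / 2 ^+ n).

Definition epsb (R : realType) n (b : bool) (g : bfun n) : R :=
  \sum_(a : vec n | odd (wt a) != b) walsh R g a ^+ 2.

Definition low n (x : vec n.+1) : vec n := [ffun i : 'I_n => x (widen_ord (leqnSn n) i)].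
Definition compl n (x : vec n) : vec n := [ffun i => ~~ x i].

Definition gb n (b : bool) (g : bfun n) : bfun n.+1 := fun x =>
  ((~~ x ord_max) && g (low x)) (+) (x ord_max && (b (+) g (compl (low x)))).

From HB Require Import structures.
From mathcomp Require Import all_boot all_order all_algebra.
From mathcomp Require Import reals ereal exp.
From mathcomp Require Import ring lra.
Import Order.TTheory GRing.Theory Num.Theory.
Local Open Scope ring_scope.
Set Implicit Arguments. Unset Strict Implicit.

(* Splitting F_2^(n+1) along the coordinate X_(n+1), a point is (a, y) with
   y in F_2^n.  On the half a = 0, g_b is g; on the half a = 1 it is
   b + g(1 + y), and the substitution y := 1 + y turns <y, alpha> into
   <y, alpha> + wt(alpha) (mod 2).  Summing both halves gives
     W_(g_b)(a, alpha) = (1 + (-1)^(b + a + wt alpha)) / 2 * W_g(alpha),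
   i.e. W_(g_b)(beta) is W_g(alpha) or 0 according to the parity of
   b + wt(beta) (lemma [walsh_gb]).
   For (3), flipping a coordinate X_i, i <= n, changes g_b exactly twice as
   often as it changes g, while flipping X_(n+1) changes it on the points
   where g(y) + g(1 + y) != b.  The proportion of such y equals eps_b(g):
   this follows from the autocorrelation identity
     sum_a (-1)^<c,a> W_g(a)^2 = 2^-n sum_y (-1)^(g(y) + g(y + c)),
   used at c = 0 (Parseval) and c = (1, ..., 1). *)

Local Notation sgn b := ((-1) ^+ (b : bool)).

Lemma bit_sign (R : numFieldType) (c : bool) : (c%:R : R) = (1 - sgn c) / 2.
Proof. by case: c; rewrite /= ?expr1 ?expr0; field. Qed.

Lemma pow2_neq0 (R : numFieldType) m : (2 ^+ m : R) != 0.
Proof. by rewrite expf_neq0 ?pnatr_eq0. Qed.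

Lemma card_vec m : #|{: vec m}| = (2 ^ m)%N.
Proof. by rewrite card_ffun card_bool card_ord. Qed.

Lemma card_setE (T : finType) (P : pred T) : #|[set x | P x]| = (\sum_x P x)%N.
Proof. by rewrite -sum1_card big_mkcond; apply: eq_bigr => x _; rewrite inE. Qed.

Definition par m (x : vec m) : bool := \big[addb/false]_(i < m) x i.

Lemma odd_wt m (x : vec m) : odd (wt x) = par x.
Proof.
rewrite /wt -sum1_card big_mkcond /=.
rewrite (big_morph odd oddD (erefl : odd 0 = false)) /par.
by apply: eq_bigr => i _; rewrite inE; case: (x i).
Qed.

Definition vadd m (y z : vec m) : vec m := [ffun i => y i (+) z i].
Definition zv m : vec m := [ffun _ => false].
Definition ones m : vec m := [ffun _ => true].

Lemma vaddv0 m (y : vec m) : vadd y (zv m) = y.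
Proof. by apply/ffunP => i; rewrite !ffunE addbF. Qed.

Lemma vadd_ones m (y : vec m) : vadd y (ones m) = compl y.
Proof. by apply/ffunP => i; rewrite !ffunE addbT. Qed.

Lemma vadd_eq0 m (y z c : vec m) : (vadd (vadd y z) c == zv m) = (z == vadd y c).
Proof.
apply/eqP/eqP => [/ffunP H|->]; apply/ffunP => i; last first.
  by rewrite !ffunE; case: (y i); case: (c i).
by move: (H i); rewrite !ffunE; case: (y i); case: (z i); case: (c i).
Qed.

Lemma complK m : involutive (@compl m).
Proof. by move=> y; apply/ffunP => i; rewrite !ffunE negbK. Qed.

Lemma flipK m (i : 'I_m) : involutive (fun y : vec m => flip y i).
Proof. by move=> y; apply/ffunP => j; rewrite !ffunE -addbA addbb addbF. Qed.

Lemma compl_flip m (y : vec m) i : compl (flip y i) = flip (compl y) i.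
Proof. by apply/ffunP => j; rewrite !ffunE addNb. Qed.

Lemma dotb_vadd m (y z a : vec m) : dotb (vadd y z) a = dotb y a (+) dotb z a.
Proof. by rewrite /dotb -big_split; apply: eq_bigr => j _; rewrite ffunE andb_addl. Qed.

Lemma dotb_zv m (a : vec m) : dotb (zv m) a = false.
Proof. by rewrite /dotb big1 // => j _; rewrite ffunE. Qed.

Lemma dotb_ones m (a : vec m) : dotb (ones m) a = par a.
Proof. by apply: eq_bigr => i _; rewrite ffunE. Qed.

Lemma dotb_compl m (y a : vec m) : dotb (compl y) a = dotb y a (+) par a.
Proof. by rewrite -vadd_ones dotb_vadd dotb_ones. Qed.

Lemma dotb_flip m (w a : vec m) i : dotb w (flip a i) = dotb w a (+) w i.
Proof.
rewrite /dotb; under eq_bigr => j _ do rewrite ffunE andb_addr.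
rewrite big_split /=; congr (_ (+) _).
rewrite (bigD1 i) //= eqxx andbT big1 ?addbF // => j /negbTE ->.
by rewrite andbF.
Qed.

Section LastCoordinate.
Variable n : nat.

Definition ext (a : bool) (y : vec n) : vec n.+1 :=
  [ffun i : 'I_n.+1 => if unlift ord_max i is Some j then y j else a].

Lemma ext_max a y : ext a y ord_max = a.
Proof. by rewrite ffunE unlift_none. Qed.

Lemma widen_lift (j : 'I_n) : widen_ord (leqnSn n) j = lift ord_max j.
Proof. by apply: val_inj; rewrite /= /bump leqNgt ltn_ord. Qed.

Lemma low_ext a y : low (ext a y) = y.
Proof. by apply/ffunP => j; rewrite !ffunE widen_lift liftK. Qed.

Lemma ext_low (x : vec n.+1) : ext (x ord_max) (low x) = x.
Proof. by apply/ffunP => i; rewrite ffunE; case: unliftP => [j ->|->]; rewrite ?ffunE ?widen_lift. Qed.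

Lemma par_low (x : vec n.+1) : par x = par (low x) (+) x ord_max.
Proof. by rewrite /par big_ord_recr; congr (_ (+) _); apply: eq_bigr => i _; rewrite ffunE. Qed.

Lemma dotb_low (x a : vec n.+1) :
  dotb x a = dotb (low x) (low a) (+) (x ord_max && a ord_max).
Proof. by rewrite /dotb big_ord_recr; congr (_ (+) _); apply: eq_bigr => i _; rewrite !ffunE. Qed.

Lemma flip_ext_low a y (i : 'I_n) :
  flip (ext a y) (widen_ord (leqnSn n) i) = ext a (flip y i).
Proof.
apply/ffunP => k; rewrite !ffunE widen_lift; case: unliftP => [j ->|->].
  by rewrite ffunE (inj_eq (@lift_inj _ _)).
by rewrite (negbTE (neq_lift _ _)) addbF.
Qed.

Lemma flip_ext_max a y : flip (ext a y) ord_max = ext (~~ a) y.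
Proof.
apply/ffunP => k; rewrite !ffunE; case: unliftP => [j ->|->].
  by rewrite eq_sym (negbTE (neq_lift _ _)) addbF.
by rewrite eqxx addbT.
Qed.

Lemma sum_vecS (V : nmodType) (h : vec n.+1 -> V) :
  \sum_(x : vec n.+1) h x = \sum_(y : vec n) (h (ext false y) + h (ext true y)).
Proof.
have half a : \sum_(x : vec n.+1 | x ord_max == a) h x = \sum_(y : vec n) h (ext a y).
  rewrite (reindex_onto (ext a) (@low n)); last by move=> x /eqP <-; rewrite ext_low.
  by apply: eq_bigl => y; rewrite low_ext ext_max !eqxx.
rewrite big_split /= -!half addrC (bigID (fun x : vec n.+1 => x ord_max)) /=.
by congr (_ + _); apply: eq_bigl => x; case: (x ord_max).
Qed.

End LastCoordinate.

Section WalshSpectrum.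
Variable R : realType.

Definition wsum m (g : bfun m) (a : vec m) : R := \sum_(y : vec m) sgn (g y (+) dotb y a).

Lemma walshE m (g : bfun m) a : walsh R g a = (2 ^+ m)^-1 * wsum g a.
Proof. by []. Qed.

(* The half X_(n+1) = 1 contributes the half X_(n+1) = 0 times a sign. *)
Lemma wsum_gb n (g : bfun n) b (beta : vec n.+1) :
  wsum (gb b g) beta = wsum g (low beta) * (1 + sgn (b (+) par beta)).
Proof.
rewrite /wsum sum_vecS mulrDr mulr1 big_split /=; congr (_ + _).
  by apply: eq_bigr => y _; rewrite /gb dotb_low ext_max !low_ext /= !addbF.
rewrite (reindex_inj (can_inj (@complK n))) big_distrl /= par_low.
apply: eq_bigr => y _; rewrite /gb dotb_low ext_max !low_ext /=.
rewrite complK dotb_compl -!signr_addb; congr (_ ^+ _).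
by case: b; case: (g y); case: (beta ord_max); case: (dotb y _); case: (par _).
Qed.

Lemma walsh_gb n (g : bfun n) b (beta : vec n.+1) :
  walsh R (gb b g) beta = if b (+) odd (wt beta) then 0 else walsh R g (low beta).
Proof.
rewrite !walshE wsum_gb odd_wt exprS invfM.
case: (b (+) par beta); first by rewrite expr1 subrr !mulr0.
by rewrite expr0; field.
Qed.

Lemma walsh_gb_sign n (g : bfun n) b (beta : vec n.+1) :
  walsh R (gb b g) beta = (1 + (-1) ^+ (b + wt beta)) / 2 * walsh R g (low beta).
Proof.
rewrite walsh_gb -signr_odd oddD.
by case: b; case: (odd (wt beta)); rewrite /= ?expr1 ?expr0; field.
Qed.

(* The nonzero spectral values of g_b are exactly those of g, hence H_inf agrees. *)
Lemma Hinf_gb n (g : bfun n) b : Hinf R (gb b g) = Hinf R g.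
Proof.
apply: le_anti; apply/andP; split; apply: le_bigmin => [|a Ha]; try exact: leey.
  have even_ext : b (+) odd (wt (ext (b (+) par a) a)) = false.
    by rewrite odd_wt par_low low_ext ext_max; case: b; case: (par a).
  by apply: (bigmin_inf (ext (b (+) par a) a)); rewrite walsh_gb even_ext low_ext.
move: Ha; rewrite walsh_gb; case: (b (+) _); first by rewrite expr0n eqxx.
by move=> Ha; apply: (bigmin_inf (low a)).
Qed.

Lemma sum_sign_dotb m (w : vec m) :
  \sum_(a : vec m) sgn (dotb w a) = if w == zv m then 2 ^+ m else 0 :> R.
Proof.
case: eqP => [->|w_neq0].
  by under eq_bigr => a _ do rewrite dotb_zv expr0; rewrite sumr_const card_vec natrX.
have [i wi] : exists i, w i.
  apply/existsP; apply: contraNT (introN eqP w_neq0) => /existsPn w0.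
  by apply/eqP/ffunP => i; rewrite ffunE; apply/negbTE.
set s := \sum_a _; suff : s = - s by lra.
rewrite {1}/s (reindex_inj (can_inj (flipK i))) /s -sumrN.
apply: eq_bigr => a _; rewrite dotb_flip wi addbT.
by case: (dotb w a); rewrite /= ?expr1 ?expr0 ?opprK.
Qed.

Lemma walsh_autocorrelation m (g : bfun m) (c : vec m) :
  \sum_(a : vec m) sgn (dotb c a) * walsh R g a ^+ 2
  = (2 ^+ m)^-1 * \sum_(y : vec m) sgn (g y (+) g (vadd y c)).
Proof.
have expand a : sgn (dotb c a) * wsum g a ^+ 2 = \sum_(y : vec m) \sum_(z : vec m)
    sgn (g y (+) g z) * sgn (dotb (vadd (vadd y z) c) a).
  rewrite expr2 /wsum big_distrl big_distrr; apply: eq_bigr => y _ /=.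
  rewrite !big_distrr; apply: eq_bigr => z _ /=.
  rewrite -!signr_addb !dotb_vadd; congr (_ ^+ _).
  by case: (g y); case: (g z); case: (dotb c a); case: (dotb y a); case: (dotb z a).
have wsum_autocorrelation : \sum_a sgn (dotb c a) * wsum g a ^+ 2
    = 2 ^+ m * \sum_y sgn (g y (+) g (vadd y c)).
  under eq_bigr => a _ do rewrite expand.
  rewrite exchange_big big_distrr; apply: eq_bigr => y _ /=.
  rewrite exchange_big /=.
  under eq_bigr => z _ do rewrite -big_distrr /= sum_sign_dotb vadd_eq0.
  rewrite (bigD1 (vadd y c)) // eqxx big1 => [|z /andP[_ /negbTE ->]]; last by rewrite mulr0.
  exact: (etrans (addr0 _) (mulrC _ _)).
have N := pow2_neq0 R m.
under eq_bigr => a _ do rewrite walshE exprMn mulrCA.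
by rewrite -big_distrr wsum_autocorrelation /=; field.
Qed.

(* Parseval: the squared Walsh coefficients sum to 1 (autocorrelation at 0). *)
Lemma walsh_parseval m (g : bfun m) : \sum_(a : vec m) walsh R g a ^+ 2 = 1.
Proof.
have := walsh_autocorrelation g (zv m).
under eq_bigr => a _ do rewrite dotb_zv mul1r.
under [X in _ = _ * X]eq_bigr => y _ do rewrite vaddv0 addbb expr0.
by rewrite sumr_const card_vec natrX mulVf ?pow2_neq0.
Qed.

Lemma epsb_card n (g : bfun n) b :
  epsb R b g = #|[set y | g y (+) g (compl y) (+) b]|%:R / 2 ^+ n.
Proof.
pose sigma : R := \sum_y sgn (g y (+) g (compl y)).
have autoc_ones : \sum_a sgn (par a) * walsh R g a ^+ 2 = (2 ^+ n)^-1 * sigma.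
  rewrite -(eq_bigr _ (fun a _ => congr1 (fun t => sgn t * _) (dotb_ones a))).
  by rewrite walsh_autocorrelation; under eq_bigr => y _ do rewrite vadd_ones.
have epsE : epsb R b g = (1 - sgn b * ((2 ^+ n)^-1 * sigma)) / 2.
  rewrite -autoc_ones; transitivity ((\sum_a walsh R g a ^+ 2
      - sgn b * \sum_a sgn (par a) * walsh R g a ^+ 2) / 2); last by rewrite walsh_parseval.
  rewrite mulr_sumr -sumrB mulr_suml /epsb big_mkcond; apply: eq_bigr => a _; rewrite odd_wt.
  by case: b; case: (par a); rewrite /= ?expr1 ?expr0; field.
rewrite (card_setE (fun y => g y (+) g (compl y) (+) b)) natr_sum epsE /sigma.
under eq_bigr => y _ do rewrite bit_sign signr_addb.
rewrite -mulr_suml sumrB sumr_const card_vec -mulr_suml.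
have N := pow2_neq0 R n.
by rewrite natrX; field.
Qed.

End WalshSpectrum.

Lemma card_flip_low n (g : bfun n) b (i : 'I_n) :
  #|[set x | gb b g x != gb b g (flip x (widen_ord (leqnSn n) i))]|
  = (2 * #|[set y | g y != g (flip y i)]|)%N.
Proof.
rewrite !card_setE sum_vecS big_split mul2n -addnn; congr (_ + _)%N.
  by apply: eq_bigr => y _; rewrite flip_ext_low /gb !ext_max !low_ext /= !addbF.
rewrite (reindex_inj (can_inj (@complK n))); apply: eq_bigr => y _.
rewrite flip_ext_low /gb !ext_max !low_ext compl_flip !complK.
by case: b; case: (g y); case: (g (flip y i)).
Qed.

Lemma card_flip_max n (g : bfun n) b :
  #|[set x | gb b g x != gb b g (flip x ord_max)]|
  = (2 * #|[set y | g y (+) g (compl y) (+) b]|)%N.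
Proof.
rewrite !card_setE sum_vecS mul2n -addnn -big_split; apply: eq_bigr => y _.
rewrite !flip_ext_max /gb !ext_max !low_ext.
by case: b; case: (g y); case: (g (compl y)).
Qed.

(* Summing the flip counts over X_1, ..., X_(n+1), with 2^(n+1) points. *)
Lemma Inf_gb (R : realType) n (g : bfun n) b :
  Inf R (gb b g) = Inf R g + epsb R b g.
Proof.
have N := pow2_neq0 R n.
rewrite /Inf big_ord_recr epsb_card card_flip_max natrM exprS; congr (_ + _).
  by apply: eq_bigr => i _; rewrite card_flip_low natrM; field.
by field.
Qed.

Theorem proposition2 (R : realType) (n : nat) (g : bfun n) (b : bool) :
  (forall beta : vec n.+1,
     walsh R (gb b g) beta
     = (1 + (-1) ^+ (b + wt beta)) / 2 * walsh R g (low beta))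
  /\ Hinf R (gb b g) = Hinf R g
  /\ Inf R (gb b g) = Inf R g + epsb R b g.
Proof.
split; first exact: walsh_gb_sign.
by split; [exact: Hinf_gb | exact: Inf_gb].
Qed.
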